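(* Let $\mathcal H$ be a hypergraph and let $\mathcal D(\mathcal H)$ be the chain complex with $\mathcal D_n(\mathcal H)=H_n(\mathcal H^n,\mathcal H^{n-1})$ and boundary map the composite $$H_n(\mathcal H^n,\mathcal H^{n-1})\xrightarrow{\ \partial_*\ } H_{n-1}(\mathcal H^{n-1})\longrightarrow H_{n-1}(\mathcal H^{n-1},\mathcal H^{n-2}),$$ where the first map is the connecting homomorphism of the pair $(\mathcal H^n,\mathcal H^{n-1})$ and the second is induced by the inclusion of pairs $(\mathcal H^{n-1},\emptyset)\to(\mathcal H^{n-1},\mathcal H^{n-2})$. Then there is an isomorphism $\lambda:H_*(\mathcal D(\mathcal H))\to H_*(\mathcal H)$, natural with respect to morphisms of hypergraphs.
   Context: A hypergraph is a finite set $\mathcal H$ of nonempty finite subsets of a vertex set; elements are hyperedges, and a hyperedge with $n+1$ vertices has dimension $n$. The $n$-skeleton $\mathcal H^n$ consists of hyperedges of dimension at most $n$, with $\mathcal H^{-1}=\mathcal H^{-2}=\emptyset$. The associated simplicial complex is $\Delta\mathcal H=\{\sigma\ne\emptyset:\sigma\subseteq\tau\text{ for some }\tau\in\mathcal H\}$. Fix an abelian coefficient group $G$; $C_*(\Delta\mathcal H)$ is the simplicial chain complex with coefficients in $G$ and boundary $\partial$, $G(\mathcal H)_n$ the $G$-linear combinations of $n$-hyperedges, and $\mathrm{Inf}_n(\mathcal H)=G(\mathcal H)_n\cap\partial_n^{-1}(G(\mathcal H)_{n-1})$. Embedded homology: $H_n(\mathcal H)=H_n(\mathrm{Inf}_*(\mathcal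 H))$; relative embedded homology of $\mathcal A\subseteq\mathcal H$: $H_n(\mathcal H,\mathcal A)=H_n(\mathrm{Inf}_*(\mathcal H)/\mathrm{Inf}_*(\mathcal A))$, with connecting homomorphism from the short exact sequence $0\to\mathrm{Inf}_*(\mathcal A)\to\mathrm{Inf}_*(\mathcal H)\to\mathrm{Inf}_*(\mathcal H)/\mathrm{Inf}_*(\mathcal A)\to0$. A morphism of hypergraphs $f:\mathcal H\to\mathcal H'$ is a vertex map with $f(\sigma)\in\mathcal H'$ for all $\sigma\in\mathcal H$; it induces the chain map sending an oriented simplex $\sigma$ to $f(\sigma)$ if $f$ is injective on $\sigma$ and to $0$ otherwise, which preserves skeleta and $\mathrm{Inf}_*$. *)

From HB Require Import structures.
From mathcomp Require Import all_boot all_order all_algebra.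
Set Implicit Arguments. Unset Strict Implicit. Unset Printing Implicit Defensive.
Import GRing.Theory.
Local Open Scope ring_scope.

(* A hyperedge s has dimension n iff #|s| = n+1.                            *)
Definition hypergraph (V : finType) (H : {set {set V}}) : Prop := set0 \notin H.

Definition skel (V : finType) (H : {set {set V}}) (n : nat) : {set {set V}} :=
  [set s in H | #|s| <= n.+1]%N.

(* H^{n-1}, with the convention H^{-1} = empty *)
Definition skelm1 (V : finType) (H : {set {set V}}) (n : nat) : {set {set V}} :=
  match n with 0 => set0 | n'.+1 => skel H n' end.

Definition hmorph (V V' : finType) (H : {set {set V}}) (H' : {set {set V'}})
  (f : V -> V') : Prop := forall s, s \in H -> f @: s \in H'.

(* Simplicial chains with coefficients in G.  A chain is a finitely         *)
(* supported function on (nonempty) subsets of V; the subset s, oriented    *)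
(* by the fixed total order of V given by enum_rank, is a basis element.    *)
(* Chains of Delta(H) embed in these (chains of the full simplex on V);     *)
(* all groups below only involve chains supported on Delta(H).              *)
Definition chain (G : zmodType) (V : finType) := {ffun {set V} -> G}.

Definition rk (V : finType) (v : V) : nat := enum_rank v.

Definition sgnz (G : zmodType) (k : nat) (a : G) : G := if odd k then - a else a.

(* simplicial boundary: d[v0..vn] = sum_i (-1)^i [v0..^vi..vn]  (n >= 1),   *)
(* and d = 0 on 0-chains (no augmentation).                                 *)
Definition bd (G : zmodType) (V : finType) (x : chain G V) : chain G V :=
  [ffun t : {set V} => if t == set0 then 0 else
     \sum_(v in ~: t) sgnz #|[set w in t | (rk w < rk v)%N]| (x (v |: t))].

Definition ninv (V V' : finType) (f : V -> V') (s : {set V}) : nat :=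
  #|[set p : V * V | [&& p.1 \in s, p.2 \in s, (rk p.1 < rk p.2)%N
                       & (rk (f p.2) < rk (f p.1))%N]]|.

(* induced chain map: s |-> f(s) (with orientation sign) if f injective on s, else 0 *)
Definition chmap (G : zmodType) (V V' : finType) (f : V -> V') (x : chain G V)
  : chain G V' :=
  [ffun t : {set V'} =>
     \sum_(s : {set V} | (f @: s == t) && (#|f @: s| == #|s|)) sgnz (ninv f s) (x s)].

Definition GH (G : zmodType) (V : finType) (H : {set {set V}}) (n : nat)
  (x : chain G V) : Prop :=
  forall s, x s != 0 -> (s \in H) && (#|s| == n.+1).

(* Inf_n(H) = G(H)_n  cap  d_n^{-1}(G(H)_{n-1}),  G(H)_{-1} = 0 *)
Definition Inf (G : zmodType) (V : finType) (H : {set {set V}}) (n : nat)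
  (x : chain G V) : Prop :=
  GH H n x /\ match n with 0 => bd x = 0 | n'.+1 => GH H n' (bd x) end.

(* Homology of chain complexes of subgroups K_* of an ambient group A with  *)
(* differential d, presented as subquotients (cycles, boundaries) of A.     *)
Section Homology.
Variables (A : zmodType) (d : A -> A).

Definition hcyc (K : nat -> A -> Prop) (n : nat) (x : A) : Prop :=
  K n x /\ match n with 0 => True | _.+1 => d x = 0 end.
Definition hbnd (K : nat -> A -> Prop) (n : nat) (x : A) : Prop :=
  exists y, K n.+1 y /\ x = d y.

(* H_n(K/L), L a subcomplex of K; elements of K_n/L_n represented by K_n *)
Definition rcyc (K L : nat -> A -> Prop) (n : nat) (x : A) : Prop :=
  K n x /\ match n with 0 => True | n'.+1 => L n' (d x) end.
Definition rbnd (K L : nat -> A -> Prop) (n : nat) (x : A) : Prop :=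
  exists y z, K n.+1 y /\ L n z /\ x = d y + z.

(* connecting homomorphism H_n(K/L) -> H_{n-1}(L) on representatives:       *)
(* lift [x] to x in K_n, apply d, the result lies in L_{n-1}.               *)
Definition connecting (x : A) : A := d x.
End Homology.

(* homology of a chain complex of subquotients (Z_n / B_n, delta_n),        *)
(* delta_n given on representatives, delta_0 = 0 (target D_{-1} = 0)        *)
Definition sqcyc (A : zmodType) (Z B : nat -> A -> Prop) (delta : nat -> A -> A)
  (n : nat) (x : A) : Prop :=
  Z n x /\ match n with 0 => True | n'.+1 => B n' (delta n x) end.
Definition sqbnd (A : zmodType) (Z B : nat -> A -> Prop) (delta : nat -> A -> A)
  (n : nat) (x : A) : Prop :=
  Z n x /\ exists y, Z n.+1 y /\ B n (x - delta n.+1 y).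

(* phi : A -> A' induces a group isomorphism Z/B -> Z'/B' *)
Definition sq_iso (A A' : zmodType) (Z B : A -> Prop) (Z' B' : A' -> Prop)
  (phi : A -> A') : Prop :=
  [/\ (forall x, Z x -> Z' (phi x)),
      (forall x y, Z x -> Z y -> B' (phi (x + y) - (phi x + phi y))),
      (forall x y, Z x -> Z y -> B (x - y) -> B' (phi x - phi y)),
      (forall x y, Z x -> Z y -> B' (phi x - phi y) -> B (x - y)) &
      (forall y, Z' y -> exists2 x, Z x & B' (phi x - y))].

Section Embedded.
Variables (G : zmodType) (V : finType).

Definition Hcyc (H : {set {set V}}) := hcyc (@bd G V) (Inf H).
Definition Hbnd (H : {set {set V}}) := hbnd (@bd G V) (Inf H).

Definition RHcyc (H A : {set {set V}}) := rcyc (@bd G V) (Inf H) (Inf A).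
Definition RHbnd (H A : {set {set V}}) := rbnd (@bd G V) (Inf H) (Inf A).

Definition Dcyc (H : {set {set V}}) (n : nat) := RHcyc (skel H n) (skelm1 H n) n.
Definition Dbnd (H : {set {set V}}) (n : nat) := RHbnd (skel H n) (skelm1 H n) n.

(* map H_{n-1}(H^{n-1}) -> H_{n-1}(H^{n-1}, H^{n-2}) induced by the inclusion *)
(* of pairs: identity on representatives                                     *)
Definition incl_pair (x : chain G V) : chain G V := x.

Definition Dd (H : {set {set V}}) (n : nat) (x : chain G V) : chain G V :=
  incl_pair (connecting (@bd G V) x).

Definition HDcyc (H : {set {set V}}) := sqcyc (Dcyc H) (Dbnd H) (Dd H).
Definition HDbnd (H : {set {set V}}) := sqbnd (Dcyc H) (Dbnd H) (Dd H).
End Embedded.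

From HB Require Import structures.
From mathcomp Require Import all_boot all_order all_algebra.
Set Implicit Arguments. Unset Strict Implicit. Unset Printing Implicit Defensive.
Import GRing.Theory.
Local Open Scope ring_scope.

(* The complex D(H) is, degree by degree, the complex Inf_*(H) itself, so the
   isomorphism lambda : H_*(D(H)) -> H_*(H) is induced by the identity on
   representatives, which makes naturality immediate. *)

Lemma sq_iso_id (A : zmodType) (Z B Z' B' : A -> Prop) :
  (forall x, Z x <-> Z' x) -> B' 0 ->
  (forall x y, Z x -> Z y -> B (x - y) <-> B' (x - y)) ->
  sq_iso Z B Z' B' (fun x => x).
Proof.
move=> eqZ B'0 eqB; split.
- by move=> x /eqZ.
- by move=> x y _ _; rewrite subrr.
- by move=> x y Zx Zy /(eqB _ _ Zx Zy).
- by move=> x y Zx Zy /(eqB _ _ Zx Zy).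
- by move=> y /eqZ Zy; exists y; rewrite ?subrr.
Qed.

Section EmbeddedChains.
Variables (G : zmodType) (V : finType).
Implicit Types (H : {set {set V}}) (x y : chain G V).

Lemma bdB x y : bd (x - y) = bd x - bd y.
Proof.
apply/ffunP => t; rewrite !ffunE; case: (t == set0); first by rewrite subr0.
rewrite -sumrB; apply: eq_bigr => v _; rewrite /sgnz !ffunE.
by case: odd => //; rewrite opprD.
Qed.

Lemma bd0 : bd (0 : chain G V) = 0.
Proof. by have := bdB 0 0; rewrite subrr => ->; rewrite subrr. Qed.

Lemma GH0 H n : GH H n (0 : chain G V).
Proof. by move=> s; rewrite ffunE eqxx. Qed.

Lemma GHB H n x y : GH H n x -> GH H n y -> GH H n (x - y).
Proof.
move=> hx hy s; rewrite !ffunE.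
have [/hx //|/negPn/eqP xs0] := boolP (x s != 0).
have [/hy //|/negPn/eqP ys0] := boolP (y s != 0).
by rewrite xs0 ys0 subrr eqxx.
Qed.

Lemma Inf0 H n : Inf H n (0 : chain G V).
Proof. by split; [apply: GH0 | case: n => [|n]; rewrite bd0 //; apply: GH0]. Qed.

Lemma InfB H n x y : Inf H n x -> Inf H n y -> Inf H n (x - y).
Proof.
case: n => [|n] [Gx bx] [Gy by_]; split; rewrite ?bdB; try exact: GHB.
by rewrite bx by_ subrr.
Qed.

Lemma GH_skel H k m x : (m <= k)%N -> GH (skel H k) m x <-> GH H m x.
Proof.
move=> le_mk; split=> hx s /hx; rewrite inE.
  by case/andP=> /andP[-> _] ->.
by case/andP=> -> /eqP cs; rewrite cs ltnS le_mk eqxx.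
Qed.

Lemma GH_skel_gt H k m x : (k < m)%N -> GH (skel H k) m x -> x = 0.
Proof.
move=> lt_km hx; apply/ffunP => s; rewrite ffunE.
apply/eqP; apply: contraT => /hx; rewrite inE.
case/andP=> /andP[_ ck] /eqP cs; move: ck; rewrite cs ltnS => le_mk.
by move: (leq_ltn_trans le_mk lt_km); rewrite ltnn.
Qed.

Lemma Inf_skel H n x : Inf (skel H n) n x <-> Inf H n x.
Proof.
have skel_n := GH_skel H x (leqnn n).
case: n skel_n => [|n] skel_n; split=> -[Gx bx]; split; try by [apply/skel_n|].
all: exact/(GH_skel H (bd x) (leqnSn n)).
Qed.

Lemma Dcyc_iff H n x : Dcyc H n x <->
  Inf H n x /\ match n with 0 => True | n'.+1 => Inf H n' (bd x) end.
Proof.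
by case: n => [|n]; split=> -[Ix bx]; split=> //; apply/Inf_skel.
Qed.

Lemma DcycB H n x y : Dcyc H n x -> Dcyc H n y -> Dcyc H n (x - y).
Proof.
move=> /Dcyc_iff[Ix bx] /Dcyc_iff[Iy by_]; apply/Dcyc_iff; split; first exact: InfB.
by case: n Ix Iy bx by_ => // n _ _ bx by_; rewrite bdB; apply: InfB.
Qed.

(* The relative boundaries of (H^n, H^{n-1}) vanish: Inf_{n+1}(H^n) = 0 and
   Inf_n(H^{n-1}) = 0. *)
Lemma Dbnd_iff H n x : Dbnd H n x <-> x = 0.
Proof.
split; last first.
  by move=> ->; exists 0, 0; rewrite bd0 addr0; split; [|split]; try apply: Inf0.
move=> [y [z [[Gy _] [[Gz _] ->]]]].
rewrite (GH_skel_gt (ltnSn n) Gy) bd0 add0r {Gy}.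
case: n Gz => [|n] Gz; last exact: GH_skel_gt (ltnSn n) Gz.
by apply/ffunP => s; rewrite ffunE; apply/eqP; apply: contraT => /Gz; rewrite inE.
Qed.

Lemma HDcyc_iff H n x : HDcyc H n x <-> Hcyc H n x.
Proof.
case: n => [|n]; split.
- by case=> /Dcyc_iff[].
- by case=> Ix _; split=> //; apply/Dcyc_iff.
- by case=> /Dcyc_iff[Ix _] /Dbnd_iff.
- case=> Ix bx0; split; last exact/Dbnd_iff.
  by apply/Dcyc_iff; split=> //; rewrite bx0; apply: Inf0.
Qed.

Lemma HDbnd_iff H n x : HDbnd H n x <-> Dcyc H n x /\ Hbnd H n x.
Proof.
rewrite /HDbnd /sqbnd /Hbnd /hbnd /Dd /incl_pair /connecting.
split=> -[Dx [y [Dy bxy]]]; split=> //; exists y.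
  by move: Dy bxy => /Dcyc_iff[Iy _] /Dbnd_iff/eqP; rewrite subr_eq0 => /eqP.
move: Dx; rewrite bxy => /Dcyc_iff[Ibx _].
by split; [apply/Dcyc_iff | apply/Dbnd_iff; rewrite subrr].
Qed.

Lemma Hbnd0 H n : Hbnd H n (0 : chain G V).
Proof. by exists 0; rewrite bd0; split=> //; apply: Inf0. Qed.

Lemma HD_iso H n :
  sq_iso (HDcyc H n) (HDbnd H n) (Hcyc H n) (Hbnd H n) (fun x : chain G V => x).
Proof.
apply: sq_iso_id; [exact: HDcyc_iff | exact: Hbnd0 |].
move=> x y [Dx _] [Dy _]; split=> [/HDbnd_iff[] //|Bxy].
by apply/HDbnd_iff; split=> //; apply: DcycB.
Qed.

End EmbeddedChains.

Theorem mainTheorem5 (G : zmodType) :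
  exists lam : forall V : finType, {set {set V}} -> nat -> chain G V -> chain G V,
    (forall (V : finType) (H : {set {set V}}), hypergraph H ->
       forall n : nat,
         sq_iso (HDcyc H n) (HDbnd H n) (Hcyc H n) (Hbnd H n) (lam V H n)) /\
    (forall (V V' : finType) (H : {set {set V}}) (H' : {set {set V'}}) (f : V -> V'),
       hypergraph H -> hypergraph H' -> hmorph H H' f ->
       forall (n : nat) (x : chain G V), HDcyc H n x ->
         Hbnd H' n (lam V' H' n (chmap f x) - chmap f (lam V H n x))).
Proof.
exists (fun V H n x => x); split=> [V H _ n | V V' H H' f _ _ _ n x _].
- exact: HD_iso.
- by rewrite subrr; apply: Hbnd0.
Qed.
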